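(* Let $K=\mathrm{SU}(2)$, $\mathcal{M}=\{(g_1,h_1,g_2,h_2)\in K^4:[g_1,h_1][g_2,h_2]=I\}/K$ with the quotient topology, and $\mathcal{M}^\circ=\mu^{-1}(\tilde\Delta^\circ)$. Then $\mathcal{M}^\circ$ is open and dense in $\mathcal{M}$.
   Context: $[a,b]=aba^{-1}b^{-1}$; $K$ acts by simultaneous conjugation; $[g_1;h_1;g_2;h_2]$ denotes a class. For $a\in K$ let $f(a)=\frac1\pi\arccos(\mathrm{tr}(a)/2)$; $\mu([g_1;h_1;g_2;h_2])=(f(h_1),f(h_2),f(h_1h_2))$. $\tilde\Delta$ is the tetrahedron with vertices $(0,0,0),(0,1,1),(1,0,1),(1,1,0)$ and $\tilde\Delta^\circ$ its interior. *)

From HB Require Import structures.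
From mathcomp Require Import all_boot all_order all_algebra.
From mathcomp Require Import all_classical all_reals all_analysis.
From mathcomp Require Import complex.
Set Implicit Arguments. Unset Strict Implicit. Unset Printing Implicit Defensive.
Import Order.TTheory GRing.Theory Num.Theory.
Import numFieldNormedType.Exports.
Local Open Scope classical_set_scope.
Local Open Scope ring_scope.

Section SU2Moduli.
Variable R : realType.
Local Notation C := (R[i]).
Local Notation mx2 := ('M[C]_2).

Definition conjT (g : mx2) : mx2 := (map_mx Num.conj g)^T.
Definition SU2 (g : mx2) : Prop := g *m conjT g = 1%:M /\ \det g = 1.

Definition commut (a b : mx2) : mx2 := a *m b *m invmx a *m invmx b.

Definition quad := (mx2 * mx2 * mx2 * mx2)%type.

Definition Xrep (x : quad) : Prop :=
  let: (g1, h1, g2, h2) := x in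
  [/\ SU2 g1, SU2 h1, SU2 g2 & SU2 h2] /\
  commut g1 h1 *m commut g2 h2 = 1%:M.

Definition Xtype := {x : quad | Xrep x}.

(* Subspace topology on X inherited from the standard topology of
   (M_2(C))^4 = C^16: sup-distance of all entries. *)
Definition close (e : R) (x y : quad) : Prop :=
  let: (a1, a2, a3, a4) := x in
  let: (b1, b2, b3, b4) := y in
  forall i j : 'I_2,
    [/\ `|a1 i j - b1 i j| < (e%:C)%C, `|a2 i j - b2 i j| < (e%:C)%C,
        `|a3 i j - b3 i j| < (e%:C)%C & `|a4 i j - b4 i j| < (e%:C)%C].

Definition openX (A : set Xtype) : Prop :=
  forall x, A x -> exists2 e : R, 0 < e &
    forall y : Xtype, close e (proj1_sig x) (proj1_sig y) -> A y.

Definition conjq (k : mx2) (x : quad) : quad :=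
  let: (g1, h1, g2, h2) := x in
  (k *m g1 *m invmx k, k *m h1 *m invmx k, k *m g2 *m invmx k,
   k *m h2 *m invmx k).

Definition orbit (x : quad) : set quad :=
  [set y | exists2 k, SU2 k & y = conjq k x].

(* M = X / K : points are the K-orbits of points of X *)
Definition Mspace := {S : set quad | exists x : Xtype, S = orbit (proj1_sig x)}.

Definition qmap (x : Xtype) : Mspace :=
  exist _ (orbit (proj1_sig x)) (ex_intro _ x erefl).

Definition openM (U : set Mspace) : Prop := openX (qmap @^-1` U).

Definition denseM (U : set Mspace) : Prop :=
  forall V : set Mspace, openM V -> V !=set0 -> (V `&` U) !=set0.

(* f(a) = arccos(tr(a)/2)/pi  (tr(a) is real for a in SU(2)) *)
Definition fK (a : mx2) : R := acos (complex.Re (\tr a) / 2) / pi.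

Definition mu_rep (x : quad) : 'rV[R]_3 :=
  let: (g1, h1, g2, h2) := x in
  \row_(i < 3) [:: fK h1; fK h2; fK (h1 *m h2)]`_i.

Definition rep (m : Mspace) : Xtype := projT1 (cid (projT2 m)).

Definition mu (m : Mspace) : 'rV[R]_3 := mu_rep (proj1_sig (rep m)).

Definition tvert (i : 'I_4) : 'rV[R]_3 :=
  \row_(j < 3) nth 0 (nth [::] [:: [:: 0; 0; 0]; [:: 0; 1; 1]; [:: 1; 0; 1]; [:: 1; 1; 0]] i) j.

Definition tetra : set 'rV[R]_3 :=
  [set p | exists l : 'I_4 -> R, (forall i, 0 <= l i) /\
     \sum_i l i = 1 /\ p = \sum_i l i *: tvert i].

Definition tetra_int : set 'rV[R]_3 := interior tetra.

Definition Mcirc : set Mspace := mu @^-1` tetra_int.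

End SU2Moduli.

From Pilot Require Import Defs.
From HB Require Import structures.
From mathcomp Require Import all_boot all_order all_algebra.
From mathcomp Require Import all_classical all_reals all_analysis.
From mathcomp Require Import complex.
From mathcomp Require Import ring lra.
Set Implicit Arguments. Unset Strict Implicit. Unset Printing Implicit Defensive.
Import Order.TTheory GRing.Theory Num.Theory.
Import numFieldNormedType.Exports.
Local Open Scope classical_set_scope.
Local Open Scope ring_scope.

(* Identify SU(2) with the unit quaternions, so that f(h) is the angle of h divided by pi.
   For unit quaternions b and d, the angles of b, d and b d satisfy the spherical triangle
   inequalities, which say that mu lies in the tetrahedron; they are strict, so that mu lies
   in its interior, as soon as the imaginary parts of b = h1 and d = h2 are not parallel.
   Openness then follows from the continuity of arccos on (-1, 1).  For density, any point
   is moved to such a transverse one by arbitrarily small moves preserving the relation: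
   right multiplication of h_i by an element commuting with g_i does not change [g_i, h_i],
   and when [g1, h1] = 1 the pair (g2, h2) may be conjugated freely. *)

Section Quaternions.
Variable R : realType.

Record quat := Quat { q0 : R; q1 : R; q2 : R; q3 : R }.

Definition qmul (p q : quat) : quat :=
  Quat (q0 p * q0 q - q1 p * q1 q - q2 p * q2 q - q3 p * q3 q)
       (q0 p * q1 q + q1 p * q0 q + q2 p * q3 q - q3 p * q2 q)
       (q0 p * q2 q + q2 p * q0 q + q3 p * q1 q - q1 p * q3 q)
       (q0 p * q3 q + q3 p * q0 q + q1 p * q2 q - q2 p * q1 q).

Definition qconj (p : quat) : quat := Quat (q0 p) (- q1 p) (- q2 p) (- q3 p).

Definition qconjg (k p : quat) : quat := qmul (qmul k p) (qconj k).

Definition qone : quat := Quat 1 0 0 0.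

Definition qnorm (p : quat) : R := q0 p ^+ 2 + q1 p ^+ 2 + q2 p ^+ 2 + q3 p ^+ 2.

Definition qdist2 (p q : quat) : R :=
  (q0 p - q0 q) ^+ 2 + (q1 p - q1 q) ^+ 2 + (q2 p - q2 q) ^+ 2 + (q3 p - q3 q) ^+ 2.

Definition vnorm2 (p : quat) : R := q1 p ^+ 2 + q2 p ^+ 2 + q3 p ^+ 2.

Definition vdot (p q : quat) : R := q1 p * q1 q + q2 p * q2 q + q3 p * q3 q.

Definition cross2 (p q : quat) : R :=
  (q2 p * q3 q - q3 p * q2 q) ^+ 2 + (q3 p * q1 q - q1 p * q3 q) ^+ 2 +
  (q1 p * q2 q - q2 p * q1 q) ^+ 2.

Definition im_multiple (m : R) (p q : quat) : Prop :=
  [/\ q1 p = m * q1 q, q2 p = m * q2 q & q3 p = m * q3 q].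

Lemma quatP (a b c d a' b' c' d' : R) :
  a = a' -> b = b' -> c = c' -> d = d' -> Quat a b c d = Quat a' b' c' d'.
Proof. by move=> -> -> -> ->. Qed.

Lemma qnormM p q : qnorm (qmul p q) = qnorm p * qnorm q.
Proof. rewrite /qnorm /=; ring. Qed.

Lemma qnormC p : qnorm (qconj p) = qnorm p.
Proof. rewrite /qnorm /=; ring. Qed.

Lemma qmul_qconj p : qmul p (qconj p) = Quat (qnorm p) 0 0 0.
Proof. rewrite /qmul /qnorm /=; apply: quatP; ring. Qed.

Lemma qmulq1 p : qmul p qone = p.
Proof. by case: p => a b c d; rewrite /qmul /=; apply: quatP; ring. Qed.

Lemma qmul1q p : qmul qone p = p.
Proof. by case: p => a b c d; rewrite /qmul /=; apply: quatP; ring. Qed.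

Lemma unit_q0_bounds p : qnorm p = 1 -> -1 <= q0 p <= 1.
Proof. by rewrite /qnorm => n1; apply/andP; split; nra. Qed.

Lemma qdist2C p q : qdist2 p q = qdist2 q p.
Proof. rewrite /qdist2; ring. Qed.

Lemma qdist2xx p : qdist2 p p = 0.
Proof. by rewrite /qdist2 !subrr expr0n /= !addr0. Qed.

Lemma qdist2_mull p k k' : qdist2 (qmul p k) (qmul p k') = qnorm p * qdist2 k k'.
Proof. rewrite /qdist2 /qnorm /=; ring. Qed.

Lemma qdist2_mulr p k k' : qdist2 (qmul k p) (qmul k' p) = qdist2 k k' * qnorm p.
Proof. rewrite /qdist2 /qnorm /=; ring. Qed.

Lemma qdist2_triangle p q r : qdist2 p r <= 2 * (qdist2 p q + qdist2 q r).
Proof.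
have D (x y : R) : (x - y) ^+ 2 <= 2 * ((x - 0) ^+ 2 + (0 - y) ^+ 2).
  by have := sqr_ge0 (x + y); nra.
rewrite /qdist2; have := D (q0 p - q0 q) (q0 r - q0 q); have := D (q1 p - q1 q) (q1 r - q1 q).
have := D (q2 p - q2 q) (q2 r - q2 q); have := D (q3 p - q3 q) (q3 r - q3 q).
rewrite !subr0 !sub0r !sqrrN; nra.
Qed.

Lemma sqr_q0_sub_le p q : (q0 p - q0 q) ^+ 2 <= qdist2 p q.
Proof. by rewrite /qdist2 -!addrA lerDl !addr_ge0 ?sqr_ge0. Qed.

Lemma qdist2_qconjg k p : qnorm k = 1 -> qnorm p = 1 ->
  qdist2 (qconjg k p) p <= 4 * qdist2 k qone.
Proof.
move=> nk np; apply: le_trans (qdist2_triangle _ (qmul k p) _) _.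
rewrite -[X in qdist2 _ X]qmulq1 qdist2_mull -[X in qdist2 (qmul k p) X]qmul1q.
rewrite qdist2_mulr qnormM nk np !mul1r mulr1.
have -> : qdist2 (qconj k) qone = qdist2 k qone by rewrite /qdist2 /=; ring.
lra.
Qed.

Lemma vnorm2_ge0 p : 0 <= vnorm2 p.
Proof. by rewrite /vnorm2 !addr_ge0 ?sqr_ge0. Qed.

Lemma lagrange_identity p q : vnorm2 p * vnorm2 q = vdot p q ^+ 2 + cross2 p q.
Proof. rewrite /vnorm2 /vdot /cross2; ring. Qed.

Lemma cross2C p q : cross2 p q = cross2 q p.
Proof. rewrite /cross2; ring. Qed.

Lemma cross2xx p : cross2 p p = 0.
Proof. rewrite /cross2; ring. Qed.

Lemma sqr3_eq0 (a b c : R) : a ^+ 2 + b ^+ 2 + c ^+ 2 <= 0 -> [/\ a = 0, b = 0 & c = 0].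
Proof.
move=> h; have := sqr_ge0 a; have := sqr_ge0 b; have := sqr_ge0 c => *.
by split; apply/eqP; rewrite -sqrf_eq0; apply/eqP; lra.
Qed.

(* [p q - q p] is twice the cross product of the imaginary parts. *)
Lemma qmul_comm_cross p q : cross2 p q <= 0 -> qmul p q = qmul q p.
Proof.
case: p q => a b c d [a' b' c' d'] /sqr3_eq0 /= [e1 e2 e3]; rewrite /qmul /=.
by apply: quatP; nra.
Qed.

Lemma vnorm2_mul_real p k : vnorm2 p <= 0 -> vnorm2 (qmul p k) = qnorm p * vnorm2 k.
Proof. by case: p => a b c d /sqr3_eq0 /= [-> -> ->]; rewrite /vnorm2 /qnorm /=; ring. Qed.

Lemma im_parallel p q : cross2 p q <= 0 -> 0 < vnorm2 q -> exists m, im_multiple m p q.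
Proof.
case: p q => a u v w [b x y z] /sqr3_eq0 /= [c1 c2 c3].
rewrite /vnorm2 /= => /gt_eqF/negbT nz.
exists ((u * x + v * y + w * z) / (x ^+ 2 + y ^+ 2 + z ^+ 2)).
split; apply: (mulIf nz); rewrite /= mulrAC divfK //.
- have -> : u * (x ^+ 2 + y ^+ 2 + z ^+ 2) =
    (u * x + v * y + w * z) * x + y * (u * y - v * x) - z * (w * x - u * z) by ring.
  by rewrite c2 c3; ring.
- have -> : v * (x ^+ 2 + y ^+ 2 + z ^+ 2) =
    (u * x + v * y + w * z) * y + z * (v * z - w * y) - x * (u * y - v * x) by ring.
  by rewrite c1 c3; ring.
- have -> : w * (x ^+ 2 + y ^+ 2 + z ^+ 2) =
    (u * x + v * y + w * z) * z + x * (w * x - u * z) - y * (v * z - w * y) by ring.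
  by rewrite c1 c2; ring.
Qed.

Lemma vnorm2_im_multiple m p q : im_multiple m p q -> vnorm2 p = m ^+ 2 * vnorm2 q.
Proof. by case=> e1 e2 e3; rewrite /vnorm2 e1 e2 e3; ring. Qed.

Lemma cross2_im_multiple m p q r : im_multiple m p q -> cross2 r p = m ^+ 2 * cross2 r q.
Proof. by case=> e1 e2 e3; rewrite /cross2 e1 e2 e3; ring. Qed.

Lemma cross2_mul_im_multiple m p q k : im_multiple m p q ->
  cross2 (qmul p k) q = qnorm p * cross2 k q.
Proof. by case=> e1 e2 e3; rewrite /cross2 /qnorm /= e1 e2 e3; ring. Qed.

Lemma cross2_qconjg_im_multiple m p q k : im_multiple m p q ->
  cross2 p (qconjg k q) = 4 * m ^+ 2 * (vdot k q ^+ 2 + q0 k ^+ 2 * vnorm2 q) * cross2 k q.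
Proof. by case=> e1 e2 e3; rewrite /cross2 /vdot /vnorm2 /= e1 e2 e3; ring. Qed.

Lemma exists_commuting_axis a : exists2 w, 0 < vnorm2 w & cross2 a w <= 0.
Proof.
have [a0|/sqr3_eq0 [e1 e2 e3]] := ltP 0 (vnorm2 a); first by exists a; rewrite ?cross2xx.
exists (Quat 0 1 0 0); first by rewrite /vnorm2 /=; lra.
by rewrite /cross2 e1 e2 e3; lra.
Qed.

Lemma exists_transverse_axis q : 0 < vnorm2 q -> exists w, 0 < cross2 w q.
Proof.
case: q => b x y z; rewrite /vnorm2 /cross2 /= => n0.
have [yz|yz] := ltP 0 (y ^+ 2 + z ^+ 2).
  by exists (Quat 0 1 0 0); rewrite /=; nra.
by exists (Quat 0 0 1 0); rewrite /=; nra.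
Qed.

End Quaternions.

Section AxisElements.
Variable R : realType.
Local Notation quat := (quat R).

(* Commutes with every quaternion whose imaginary part is parallel to that of [w]. *)
Definition qaxis (t : R) (w : quat) : quat :=
  Quat (Num.sqrt (1 - t ^+ 2 * vnorm2 w)) (t * q1 w) (t * q2 w) (t * q3 w).

Lemma vnorm2_qaxis t w : vnorm2 (qaxis t w) = t ^+ 2 * vnorm2 w.
Proof. rewrite /vnorm2 /=; ring. Qed.

Lemma cross2_qaxisl t w q : cross2 (qaxis t w) q = t ^+ 2 * cross2 w q.
Proof. rewrite /cross2 /=; ring. Qed.

Lemma qnorm_qaxis t w : t ^+ 2 * vnorm2 w <= 1 -> qnorm (qaxis t w) = 1.
Proof. by rewrite -subr_ge0 /qnorm /= => /sqr_sqrtr ->; rewrite /vnorm2; ring. Qed.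

Lemma qdist2_qaxis t w : t ^+ 2 * vnorm2 w <= 1 ->
  qdist2 (qaxis t w) (qone R) <= 2 * (t ^+ 2 * vnorm2 w).
Proof.
rewrite -subr_ge0 /qdist2 /= !subr0 => /sqr_sqrtr.
have := sqrtr_ge0 (1 - t ^+ 2 * vnorm2 w); have := vnorm2_ge0 w.
rewrite /vnorm2; set c := Num.sqrt _; nra.
Qed.

Lemma small_sqr_mul (n r : R) : 0 <= n -> 0 < r -> exists2 t : R, 0 < t & t ^+ 2 * n < r.
Proof.
move=> n0 r0; pose m := Num.min 1 r.
have m0 : 0 < m by rewrite lt_min ltr01.
have [m1 mr] : m <= 1 /\ m <= r by rewrite !ge_min !lexx orbT.
have n1 : 0 < n + 1 by rewrite ltr_wpDl.
exists (m / (n + 1)); first by rewrite divr_gt0.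
have tn : m / (n + 1) * (n + 1) = m by rewrite divfK // gt_eqF.
have : 0 < m / (n + 1) by rewrite divr_gt0.
move: tn; set t := m / (n + 1) => tn t0.
have tm : t <= m by rewrite -tn ler_peMr //; lra.
nra.
Qed.

Lemma qaxis_small w r : 0 < r -> exists2 t : R, 0 < t &
  [/\ qnorm (qaxis t w) = 1, 0 < q0 (qaxis t w) & qdist2 (qaxis t w) (qone R) < r].
Proof.
move=> r0; have r' : 0 < Num.min 1 (r / 2) by rewrite lt_min ltr01 divr_gt0.
have [t t0] := small_sqr_mul (vnorm2_ge0 w) r'; rewrite lt_min => /andP[t1 tr].
exists t => //; split; first exact/qnorm_qaxis/ltW.
  by rewrite /= sqrtr_gt0 subr_gt0.
by apply: le_lt_trans (qdist2_qaxis (ltW t1)) _; lra.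
Qed.

End AxisElements.

Section MatrixModel.
Variable R : realType.
Local Notation C := (R[i]).
Local Notation mx2 := ('M[C]_2).
Local Notation quat := (quat R).

Definition quat_mx (p : quat) : mx2 :=
  \matrix_(i, j)
    if i == 0 :> nat then
      if j == 0 :> nat then (q0 p +i* q1 p)%C else (q2 p +i* q3 p)%C
    else if j == 0 :> nat then (- q2 p +i* q3 p)%C else (q0 p +i* - q1 p)%C.

Lemma ord2P (i : 'I_2) : i = ord0 \/ i = ord_max.
Proof. by case: i => [[|[|//]] Hi]; [left|right]; apply: val_inj. Qed.

Lemma sum_ord2 (V : nmodType) (F : 'I_2 -> V) : \sum_(k < 2) F k = F ord0 + F ord_max.
Proof. by rewrite !big_ord_recl big_ord0 addr0; congr (_ + F _); apply: val_inj. Qed.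

Lemma det_mx2 (T : comRingType) (A : 'M[T]_2) :
  \det A = A ord0 ord0 * A ord_max ord_max - A ord0 ord_max * A ord_max ord0.
Proof.
rewrite (expand_det_row _ ord0) sum_ord2 /cofactor !det_mx11 !mxE /=.
have -> : lift ord0 0 = ord_max :> 'I_2 by apply: val_inj.
have -> : lift ord_max 0 = ord0 :> 'I_2 by apply: val_inj.
rewrite expr0 expr1 mul1r; ring.
Qed.

Lemma complexP (a b c d : R) : a = c -> b = d -> (a +i* b)%C = (c +i* d)%C.
Proof. by move=> -> ->. Qed.

Lemma quat_mxM p q : quat_mx (qmul p q) = quat_mx p *m quat_mx q.
Proof.
apply/matrixP => i j; rewrite !mxE sum_ord2 !mxE.
by case: (ord2P i) => ->; case: (ord2P j) => -> /=; apply: complexP; ring.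
Qed.

Lemma quat_mx1 : quat_mx (qone R) = 1%:M.
Proof.
apply/matrixP => i j; rewrite !mxE.
by case: (ord2P i) => ->; case: (ord2P j) => -> /=; apply: complexP; ring.
Qed.

Lemma conjT_quat_mx p : conjT (quat_mx p) = quat_mx (qconj p).
Proof.
apply/matrixP => i j; rewrite !mxE.
by case: (ord2P i) => ->; case: (ord2P j) => -> /=; apply: complexP; ring.
Qed.

Lemma det_quat_mx p : \det (quat_mx p) = (qnorm p)%:C%C.
Proof. by rewrite det_mx2 !mxE /=; apply: complexP; rewrite /qnorm; ring. Qed.

Lemma tr_quat_mx p : \tr (quat_mx p) = (q0 p *+ 2)%:C%C.
Proof. by rewrite /mxtrace sum_ord2 !mxE /=; apply: complexP; ring. Qed.

Lemma quat_mx_mul_qconj p : qnorm p = 1 -> quat_mx p *m quat_mx (qconj p) = 1%:M.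
Proof. by move=> n1; rewrite -quat_mxM qmul_qconj n1 -quat_mx1. Qed.

Lemma quat_mx_unit p : qnorm p = 1 -> quat_mx p \in unitmx.
Proof. by move/quat_mx_mul_qconj/mulmx1_unit => []. Qed.

Lemma quat_mx_qconj p : qnorm p = 1 -> quat_mx (qconj p) = (quat_mx p)^-1.
Proof.
move=> n1; have := quat_mx_mul_qconj n1.
by move/(congr1 (mulmx (invmx (quat_mx p)))); rewrite mulmx1 mulKmx ?quat_mx_unit.
Qed.

Lemma SU2_quat_mx p : qnorm p = 1 -> SU2 (quat_mx p).
Proof. by move=> n1; split; rewrite ?conjT_quat_mx ?quat_mx_mul_qconj ?det_quat_mx ?n1. Qed.

(* Unitarity forces the second row of [g] to be [(- conj b, conj a)], given the first row
   [(a, b)]. *)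
Lemma SU2_quat_mxP g : SU2 g -> exists2 p, g = quat_mx p & qnorm p = 1.
Proof.
case=> U D.
have := congr1 (fun M : mx2 => M ord0 ord0) U.
have := congr1 (fun M : mx2 => M ord_max ord0) U.
rewrite !mxE !sum_ord2 !mxE /= => E10 E00.
move: D; rewrite det_mx2 => D.
set a := g ord0 ord0 in E00 E10 D *; set b := g ord0 ord_max in E00 E10 D *.
set c := g ord_max ord0 in E10 D *; set d := g ord_max ord_max in E10 D *.
have Ed : d = Num.conj a.
  have E : d * (a * Num.conj a + b * Num.conj b) =
     Num.conj a * (a * d - b * c) + b * (c * Num.conj a + d * Num.conj b) by ring.
  by rewrite E00 D E10 mulr1 mulr0 mulr1 addr0 in E.
have Ec : c = - Num.conj b.
  have E : c * (a * Num.conj a + b * Num.conj b) =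
     - Num.conj b * (a * d - b * c) + a * (c * Num.conj a + d * Num.conj b) by ring.
  by rewrite E00 D E10 mulr1 mulr0 mulr1 addr0 in E.
exists (Quat (complex.Re a) (complex.Im a) (complex.Re b) (complex.Im b)).
  apply/matrixP => i j; rewrite !mxE.
  case: (ord2P i) => ->; case: (ord2P j) => -> /=; rewrite -?/c -?/d ?Ec ?Ed /a /b.
  - by case: (g ord0 ord0).
  - by case: (g ord0 ord_max).
  - by case: (g ord0 ord_max) => x y /=; apply: complexP; ring.
  - by case: (g ord0 ord0) => x y /=; apply: complexP; ring.
move: E00; rewrite /qnorm /a /b /=.
by case: (g ord0 ord0) => x y; case: (g ord0 ord_max) => z w /= [E _]; rewrite -E; ring.
Qed.

End MatrixModel.

Section Commutators.
Variable T : unitRingType.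

Lemma commutator_mulr (a b k : T) : b \is a GRing.unit -> k \is a GRing.unit ->
  a * k = k * a -> a * (b * k) * a^-1 * (b * k)^-1 = a * b * a^-1 * b^-1.
Proof.
move=> ub uk ak; have /commrV kaV : GRing.comm k a by [].
by rewrite invrM // !mulrA -(mulrA _ k) kaV !mulrA mulrK.
Qed.

Lemma commutator_conj (a b k : T) :
  a \is a GRing.unit -> b \is a GRing.unit -> k \is a GRing.unit ->
  k * a * k^-1 * (k * b * k^-1) * (k * a * k^-1)^-1 * (k * b * k^-1)^-1 =
  k * (a * b * a^-1 * b^-1) * k^-1.
Proof. by move=> ua ub uk; rewrite !invrM ?invrK ?unitrMl ?unitrV // !mulrA !mulrVK. Qed.

Lemma commutator_comm (a b : T) : a \is a GRing.unit -> b \is a GRing.unit ->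
  a * b = b * a -> a * b * a^-1 * b^-1 = 1.
Proof. by move=> ua ub ->; rewrite mulrK ?divrr. Qed.

End Commutators.

Section QuaternionRepresentations.
Variable R : realType.
Local Notation quat := (quat R).
Local Notation qm := (@quat_mx R).

Definition Xq (a1 b1 a2 b2 : quat) : Prop :=
  [/\ qnorm a1 = 1, qnorm b1 = 1, qnorm a2 = 1 & qnorm b2 = 1] /\
  commut (qm a1) (qm b1) *m commut (qm a2) (qm b2) = 1%:M.

Lemma Xq_Xrep a1 b1 a2 b2 : Xq a1 b1 a2 b2 -> Xrep (qm a1, qm b1, qm a2, qm b2).
Proof. by case=> -[n1 n2 n3 n4] E; split => //; split; apply: SU2_quat_mx. Qed.

Lemma Xrep_Xq x : Xrep x ->
  exists a1 b1 a2 b2, x = (qm a1, qm b1, qm a2, qm b2) /\ Xq a1 b1 a2 b2.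
Proof.
case: x => [[[g1 h1] g2] h2] /= [[s1 s2 s3 s4]].
have [a1 -> n1] := SU2_quat_mxP s1; have [b1 -> n2] := SU2_quat_mxP s2.
have [a2 -> n3] := SU2_quat_mxP s3; have [b2 -> n4] := SU2_quat_mxP s4.
by move=> E; exists a1, b1, a2, b2.
Qed.

Lemma Xq_sym a1 b1 a2 b2 : Xq a1 b1 a2 b2 -> Xq a2 b2 a1 b1.
Proof. by case=> -[n1 n2 n3 n4] /mulmx1C E. Qed.

Lemma commutE (a b : 'M[R[i]]_2) : commut a b = a * b * a^-1 * b^-1.
Proof. by []. Qed.

Let quat_mxMr p q : qm (qmul p q) = qm p * qm q := quat_mxM p q.

Lemma Xq_mulr a1 b1 a2 b2 k : Xq a1 b1 a2 b2 -> qnorm k = 1 ->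
  qmul a1 k = qmul k a1 -> Xq a1 (qmul b1 k) a2 b2.
Proof.
move=> [[n1 n2 n3 n4] E] nk ak; split; first by rewrite qnormM n2 nk mulr1.
rewrite quat_mxMr !commutE commutator_mulr ?quat_mx_unit //.
by rewrite -!quat_mxMr ak.
Qed.

Lemma Xq_conjr a1 b1 a2 b2 k : Xq a1 b1 a2 b2 -> qnorm k = 1 ->
  qmul a1 b1 = qmul b1 a1 -> Xq a1 b1 (qconjg k a2) (qconjg k b2).
Proof.
move=> [[n1 n2 n3 n4] E] nk ab.
have c1 : qm a1 * qm b1 / qm a1 / qm b1 = 1.
  by apply: commutator_comm; rewrite ?quat_mx_unit // -!quat_mxMr ab.
have c2 : qm a2 * qm b2 / qm a2 / qm b2 = 1 by move: E; rewrite !commutE c1 mul1mx.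
split; first by rewrite /qconjg !qnormM qnormC n3 n4 nk !mulr1.
rewrite /qconjg !quat_mxMr quat_mx_qconj // !commutE commutator_conj ?quat_mx_unit //.
by rewrite c1 c2 mulr1 divrr ?quat_mx_unit // mul1mx.
Qed.

End QuaternionRepresentations.

Section Perturbations.
Variable R : realType.
Local Notation quat := (quat R).

Lemma Xq_perturb_nonreal (a1 b1 a2 b2 : quat) r : Xq a1 b1 a2 b2 -> 0 < r ->
  exists b1', [/\ Xq a1 b1' a2 b2, qdist2 b1' b1 < r & 0 < vnorm2 b1'].
Proof.
move=> X r0; have [[_ nb1 _ _] _] := X.
have [b1_0|b1_re] := ltP 0 (vnorm2 b1); first by exists b1; rewrite qdist2xx.
have [w w0 aw] := exists_commuting_axis a1.
have [t t0 [nk _ kr]] := qaxis_small w r0.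
exists (qmul b1 (qaxis t w)); split.
- apply: Xq_mulr X nk _; apply: qmul_comm_cross.
  by rewrite cross2C cross2_qaxisl cross2C mulr_ge0_le0 ?sqr_ge0.
- by rewrite -[X in qdist2 _ X]qmulq1 qdist2_mull nb1 mul1r.
- by rewrite vnorm2_mul_real // nb1 mul1r vnorm2_qaxis mulr_gt0 ?exprn_gt0.
Qed.

Lemma Xq_perturb_mulr_transverse (a1 b1 a2 b2 : quat) m r : Xq a1 b1 a2 b2 -> 0 < r ->
  im_multiple m b1 b2 -> 0 < cross2 a1 b2 ->
  exists b1', [/\ Xq a1 b1' a2 b2, qdist2 b1' b1 < r & 0 < cross2 b1' b2].
Proof.
move=> X r0 b12 a1b2; have [[_ nb1 _ _] _] := X.
have [t t0 [nk _ kr]] := qaxis_small a1 r0.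
exists (qmul b1 (qaxis t a1)); split.
- apply: Xq_mulr X nk _; apply: qmul_comm_cross.
  by rewrite cross2C cross2_qaxisl cross2xx mulr0.
- by rewrite -[X in qdist2 _ X]qmulq1 qdist2_mull nb1 mul1r.
- by rewrite (cross2_mul_im_multiple _ b12) nb1 mul1r cross2_qaxisl mulr_gt0 ?exprn_gt0.
Qed.

Lemma Xq_perturb_conj_transverse (a1 b1 a2 b2 : quat) m r : Xq a1 b1 a2 b2 -> 0 < r ->
  0 < vnorm2 b1 -> 0 < vnorm2 b2 -> im_multiple m b1 b2 -> cross2 a1 b2 <= 0 ->
  exists a2' b2', [/\ Xq a1 b1 a2' b2', qdist2 a2' a2 < r, qdist2 b2' b2 < r
    & 0 < cross2 b1 b2'].
Proof.
move=> X r0 b1_0 b2_0 b12 a1b2; have [[_ _ na2 nb2] _] := X.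
have [w wb2] := exists_transverse_axis b2_0.
have r4 : 0 < r / 4 by rewrite divr_gt0.
have [t t0 [nk k0 kr]] := qaxis_small w r4.
have near p : qnorm p = 1 -> qdist2 (qconjg (qaxis t w) p) p < r.
  by move=> np; apply: le_lt_trans (qdist2_qconjg nk np) _; lra.
exists (qconjg (qaxis t w) a2), (qconjg (qaxis t w) b2); split; rewrite ?near //.
  apply: Xq_conjr X nk _; apply: qmul_comm_cross.
  by rewrite (cross2_im_multiple _ b12) mulr_ge0_le0 ?sqr_ge0.
move: b1_0; rewrite (vnorm2_im_multiple b12) pmulr_lgt0 // => m0.
have P : 0 < vdot (qaxis t w) b2 ^+ 2 + q0 (qaxis t w) ^+ 2 * vnorm2 b2.
  by rewrite ltr_wpDl ?sqr_ge0 // mulr_gt0 ?exprn_gt0.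
have m4 : 0 < 4 * m ^+ 2 by rewrite mulr_gt0.
rewrite (cross2_qconjg_im_multiple _ b12) cross2_qaxisl.
by apply: mulr_gt0 (mulr_gt0 m4 P) _; rewrite mulr_gt0 ?exprn_gt0.
Qed.

Lemma Xq_perturb_transverse (a1 b1 a2 b2 : quat) r : Xq a1 b1 a2 b2 -> 0 < r ->
  0 < vnorm2 b1 -> 0 < vnorm2 b2 ->
  exists b1' a2' b2', [/\ Xq a1 b1' a2' b2', qdist2 b1' b1 < r, qdist2 a2' a2 < r,
    qdist2 b2' b2 < r & 0 < cross2 b1' b2'].
Proof.
move=> X r0 b1_0 b2_0.
have [tr|par] := ltP 0 (cross2 b1 b2); first by exists b1, a2, b2; rewrite !qdist2xx.
have [m b12] := im_parallel par b2_0.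
have [a1b2|a1b2] := ltP 0 (cross2 a1 b2).
  have [b1' [X' d1 tr]] := Xq_perturb_mulr_transverse X r0 b12 a1b2.
  by exists b1', a2, b2; rewrite !qdist2xx.
have [a2' [b2' [X' d2 d3 tr]]] := Xq_perturb_conj_transverse X r0 b1_0 b2_0 b12 a1b2.
by exists b1, a2', b2'; rewrite qdist2xx.
Qed.

Lemma Xq_dense_transverse (a1 b1 a2 b2 : quat) r : Xq a1 b1 a2 b2 -> 0 < r ->
  exists b1' a2' b2', [/\ Xq a1 b1' a2' b2', qdist2 b1' b1 < r, qdist2 a2' a2 < r,
    qdist2 b2' b2 < r & 0 < cross2 b1' b2'].
Proof.
move=> X r0; have r4 : 0 < r / 4 by rewrite divr_gt0.
have [c1 [X1 d1 n1]] := Xq_perturb_nonreal X r4.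
have [c2 [X2 d2 n2]] := Xq_perturb_nonreal (Xq_sym X1) r4.
have [b1' [a2' [b2' [X3 e1 e2 e3 tr]]]] := Xq_perturb_transverse (Xq_sym X2) r4 n1 n2.
exists b1', a2', b2'; split => //.
- by apply: le_lt_trans (qdist2_triangle _ c1 _) _; lra.
- by lra.
- by apply: le_lt_trans (qdist2_triangle _ c2 _) _; lra.
Qed.

End Perturbations.

Section Tetrahedron.
Variable R : realType.

Lemma acos_triangle (x y z t : R) : -1 <= x <= 1 -> -1 <= y <= 1 ->
  z = x * y - t -> `|t| < Num.sqrt (1 - x ^+ 2) * Num.sqrt (1 - y ^+ 2) ->
  [/\ acos x - acos y < acos z, acos y - acos x < acos z, acos z < acos x + acos y
    & acos z < pi *+ 2 - acos x - acos y].
Proof.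
move=> hx hy hz ht.
have [/andP[a0 api] ca] := acos_def hx; have [/andP[b0 bpi] cb] := acos_def hy.
move: a0 api ca b0 bpi cb; set a := acos x; set b := acos y => a0 api ca b0 bpi cb.
have [sa sb] : sin a = Num.sqrt (1 - x ^+ 2) /\ sin b = Num.sqrt (1 - y ^+ 2).
  by rewrite !sin_acos.
have zlt : z < cos (a - b).
  by rewrite hz cosB ca cb sa sb; have := ler_norm (- t); rewrite normrN; lra.
have zgt : cos (a + b) < z by rewrite hz cosD ca cb sa sb; have := ler_norm t; lra.
have hz' : -1 <= z <= 1 by have := cos_geN1 (a + b); have := cos_le1 (a - b); lra.
have [/andP[c0 cpi] cc] := acos_def hz'.
move: c0 cpi cc; set c := acos z => c0 cpi cc.
have pi0 := pi_gt0 R.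
have cos_lt (u v : R) : 0 <= u <= pi -> 0 <= v <= pi -> cos u < cos v -> v < u.
  by move=> hu hv; rewrite ltr_cos ?in_itv.
have dist_ab : `|a - b| < c.
  apply: cos_lt; first by rewrite c0 cpi.
    by rewrite normr_ge0 /=; case: (lerP 0 (a - b)) => h;
      [rewrite ger0_norm | rewrite ltr0_norm]; lra.
  by rewrite cc; case: (lerP 0 (a - b)) => h; [rewrite ger0_norm | rewrite ltr0_norm ?cosN].
have := ler_norm (a - b); have := ler_norm (b - a); rewrite distrC => ab ba.
case: (lerP (a + b) pi) => hab.
  have : c < a + b by apply: cos_lt; rewrite ?cc ?c0 ?cpi //; apply/andP; split; lra.
  by split; lra.
have : c < pi *+ 2 - a - b.
  apply: cos_lt; rewrite ?c0 ?cpi //; first by apply/andP; split; rewrite mulr2n; lra.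
  by rewrite cc (_ : pi *+ 2 - a - b = - (a + b) + pi *+ 2) ?cosD2pi ?cosN //; ring.
by split; lra.
Qed.

Definition pt3 (a b c : R) : 'rV[R]_3 := \row_(i < 3) [:: a; b; c]`_i.

Lemma ord3P (j : 'I_3) :
  [\/ j = Ordinal (isT : 0 < 3), j = Ordinal (isT : 1 < 3) | j = Ordinal (isT : 2 < 3)]%N.
Proof. by case: j => [[|[|[|//]]] Hi]; [apply: Or31|apply: Or32|apply: Or33]; apply: val_inj. Qed.

Lemma sum_ord4 (V : nmodType) (F : 'I_4 -> V) : \sum_(k < 4) F k =
  F (Ordinal (isT : 0 < 4)%N) + F (Ordinal (isT : 1 < 4)%N) +
  F (Ordinal (isT : 2 < 4)%N) + F (Ordinal (isT : 3 < 4)%N).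
Proof.
rewrite !big_ord_recl big_ord0 addr0 !addrA.
by congr (F _ + F _ + F _ + F _); apply: val_inj.
Qed.

Lemma tetra_pt3 (a b c : R) :
  0 <= 1 - (a + b + c) / 2 -> 0 <= (b + c - a) / 2 -> 0 <= (a + c - b) / 2 ->
  0 <= (a + b - c) / 2 -> tetra (pt3 a b c).
Proof.
move=> h0 h1 h2 h3.
exists (fun i : 'I_4 =>
  [:: 1 - (a + b + c) / 2; (b + c - a) / 2; (a + c - b) / 2; (a + b - c) / 2]`_i).
split; [|split].
- by case=> [[|[|[|[|//]]]] ?].
- by rewrite sum_ord4 /=; lra.
- apply/rowP => j; rewrite !mxE summxE sum_ord4 !mxE /=.
  by case: (ord3P j) => -> /=; lra.
Qed.

Lemma tetra_int_pt3 (a b c : R) :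
  b - a < c -> a - b < c -> c < a + b -> c < 2 - a - b -> tetra_int (pt3 a b c).
Proof.
move=> h1 h2 h3 h0.
pose m := Num.min (Num.min (2 - a - b - c) (b + c - a)) (Num.min (a + c - b) (a + b - c)).
have m0 : 0 < m by rewrite !lt_min; apply/andP; split; apply/andP; split; lra.
have [m1 m2 m3 m4] : [/\ m <= 2 - a - b - c, m <= b + c - a, m <= a + c - b & m <= a + b - c].
  by split; rewrite !ge_min lexx ?orbT.
apply/nbhs_ballP; exists (m / 4) => [|q [_ Hq]]; first by rewrite /=; lra.
have -> : q = pt3 (q ord0 (Ordinal (isT : 0 < 3)%N)) (q ord0 (Ordinal (isT : 1 < 3)%N))
    (q ord0 (Ordinal (isT : 2 < 3)%N)).
  by apply/rowP => j; rewrite !mxE; case: (ord3P j) => ->.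
move: (Hq ord0 (Ordinal (isT : 0 < 3)%N)) (Hq ord0 (Ordinal (isT : 1 < 3)%N))
  (Hq ord0 (Ordinal (isT : 2 < 3)%N)); rewrite /ball /= !mxE /=.
rewrite !ltr_norml => /andP[? ?] /andP[? ?] /andP[? ?].
by apply: tetra_pt3; lra.
Qed.

Lemma tetra_coord_bounds (q : 'rV[R]_3) j : tetra q -> 0 <= q ord0 j <= 1.
Proof.
case=> l [l0 [ls ->]]; move: ls (l0 (Ordinal (isT : 0 < 4)%N)) (l0 (Ordinal (isT : 1 < 4)%N))
  (l0 (Ordinal (isT : 2 < 4)%N)) (l0 (Ordinal (isT : 3 < 4)%N)).
rewrite summxE sum_ord4 !sum_ord4 !mxE /= => *.
by case: (ord3P j) => -> /=; apply/andP; split; lra.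
Qed.

Lemma tetra_int_coord_bounds (p : 'rV[R]_3) j : tetra_int p -> 0 < p ord0 j < 1.
Proof.
move=> /nbhs_ballP [e /= e0 He].
pose q (s : R) : 'rV[R]_3 := \row_k (p ord0 k + (if k == j then s * (e / 2) else 0)).
have qb s : `|s| = 1 -> ball p e (q s).
  move=> s1; split => // i k; rewrite /ball /= !mxE (ord1 i).
  case: eqP => _; last by rewrite addr0 subrr normr0.
  by rewrite opprD addrA subrr add0r normrN normrM s1 mul1r gtr0_norm; lra.
have /andP[h1 _] := tetra_coord_bounds j (He _ (qb (-1) (normrN1 _))).
have /andP[_ h2] := tetra_coord_bounds j (He _ (qb 1 (normr1 _))).
by move: h1 h2; rewrite !mxE eqxx => ? ?; apply/andP; split; lra.
Qed.

End Tetrahedron.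

Section MomentMapQuaternions.
Variable R : realType.
Local Notation quat := (quat R).
Local Notation qm := (@quat_mx R).

Definition muq (b d : quat) : 'rV[R]_3 :=
  pt3 (acos (q0 b) / pi) (acos (q0 d) / pi) (acos (q0 (qmul b d)) / pi).

Lemma fK_quat_mx (p : quat) : fK (qm p) = acos (q0 p) / pi.
Proof. by rewrite /fK tr_quat_mx /= mulr2n; congr (acos _ / pi); lra. Qed.

Lemma mu_rep_quat_mx (a1 b1 a2 b2 : quat) : mu_rep (qm a1, qm b1, qm a2, qm b2) = muq b1 b2.
Proof. by rewrite /mu_rep /muq /pt3 -quat_mxM !fK_quat_mx. Qed.

(* [acos_triangle] applies with [t = vdot b d], and by Lagrange's identity the bound
   [|t| < |Im b| |Im d|] is strict exactly when the imaginary parts are not parallel. *)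
Lemma tetra_int_transverse (b d : quat) : qnorm b = 1 -> qnorm d = 1 -> 0 < cross2 b d ->
  tetra_int (muq b d).
Proof.
move=> nb nd tr.
have eb : 1 - q0 b ^+ 2 = vnorm2 b by move: nb; rewrite /qnorm /vnorm2; lra.
have ed : 1 - q0 d ^+ 2 = vnorm2 d by move: nd; rewrite /qnorm /vnorm2; lra.
have hz : q0 (qmul b d) = q0 b * q0 d - vdot b d by rewrite /vdot /=; ring.
have ht : `|vdot b d| < Num.sqrt (1 - q0 b ^+ 2) * Num.sqrt (1 - q0 d ^+ 2).
  rewrite eb ed -sqrtrM ?vnorm2_ge0 // lagrange_identity -sqrtr_sqr ltr_sqrt ?ltrDl //.
  by rewrite ltr_wpDl ?sqr_ge0.
have [h1 h2 h3 h4] := acos_triangle (unit_q0_bounds nb) (unit_q0_bounds nd) hz ht.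
have pi0 := pi_gt0 R.
have div_lt (u v : R) : u < v -> u / pi < v / pi by move=> ?; rewrite ltr_pM2r ?invr_gt0.
apply: tetra_int_pt3; rewrite -?mulrBl -?mulrDl; try exact: div_lt.
have -> : 2 = pi *+ 2 / pi :> R by rewrite mulrnAl divff ?gt_eqF.
by rewrite -!mulrBl; exact: div_lt.
Qed.

Lemma acos_div_pi_interior (c : R) : -1 <= c <= 1 -> 0 < acos c / pi < 1 -> -1 < c < 1.
Proof.
move=> /andP[c1 c2] /andP[h1 h2]; have pi0 := pi_gt0 R.
rewrite !lt_neqAle c1 c2 !andbT; apply/andP; split; apply/eqP => e.
- by move: h2; rewrite -e acosN1 divff ?gt_eqF ?ltxx.
- by move: h1; rewrite e acos1 mul0r ltxx.
Qed.

Lemma acos_div_pi_near (c e : R) : -1 < c < 1 -> 0 < e -> exists2 d, 0 < d &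
  forall c', (c - c') ^+ 2 < d -> `|acos c / pi - acos c' / pi| < e.
Proof.
move=> hc e0; have pi0 := pi_gt0 R.
have := @cvgr_dist_lt _ _ _ (nbhs c) _ (@acos R) _ (continuous_acos hc) _ (mulr_gt0 e0 pi0).
move=> /(_ (nbhs_filter _)) /nbhs_ballP [d /= d0 Hd].
exists (d ^+ 2) => [|c' cc']; first exact: exprn_gt0.
have : `|acos c - acos c'| < e * pi.
  apply: Hd; rewrite /ball /=; have := normr_ge0 (c - c').
  by have := real_normK (num_real (c - c')); nra.
by rewrite -mulrBl normrM (@gtr0_norm _ pi^-1) ?invr_gt0 // ltr_pdivrMr.
Qed.

Lemma qdist2_qmul_le (b d b' d' : quat) : qnorm b = 1 -> qnorm d' = 1 ->
  qdist2 (qmul b d) (qmul b' d') <= 2 * (qdist2 d d' + qdist2 b b').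
Proof.
move=> nb nd'; apply: le_trans (qdist2_triangle _ (qmul b d') _) _.
by rewrite qdist2_mull qdist2_mulr nb nd' mul1r mulr1.
Qed.

Lemma tetra_int_muq_near (b1 b2 : quat) : qnorm b1 = 1 -> qnorm b2 = 1 ->
  tetra_int (muq b1 b2) -> exists2 d, 0 < d & forall b1' b2' : quat,
    qnorm b1' = 1 -> qnorm b2' = 1 -> qdist2 b1 b1' < d -> qdist2 b2 b2' < d ->
    tetra_int (muq b1' b2').
Proof.
move=> nb1 nb2 hx; have nb12 : qnorm (qmul b1 b2) = 1 by rewrite qnormM nb1 nb2 mulr1.
have /nbhs_ballP [e /= e0 He] := @open_interior _ (@tetra R) _ hx.
have near (c : R) : -1 <= c <= 1 -> 0 < acos c / pi < 1 -> exists2 d, 0 < d &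
    forall c', (c - c') ^+ 2 < d -> `|acos c / pi - acos c' / pi| < e.
  by move=> c1 c01; apply: acos_div_pi_near (acos_div_pi_interior c1 c01) e0.
move: (tetra_int_coord_bounds (Ordinal (isT : 0 < 3)%N) hx)
  (tetra_int_coord_bounds (Ordinal (isT : 1 < 3)%N) hx)
  (tetra_int_coord_bounds (Ordinal (isT : 2 < 3)%N) hx); rewrite !mxE /= => h0 h1 h2.
have [d0 d00 D0] := near _ (unit_q0_bounds nb1) h0.
have [d1 d10 D1] := near _ (unit_q0_bounds nb2) h1.
have [d2 d20 D2] := near _ (unit_q0_bounds nb12) h2.
exists (Num.min d0 (Num.min d1 (d2 / 4))) => [|b1' b2' nb1' nb2'].
  by rewrite !lt_min d00 d10 divr_gt0.
rewrite !lt_min => /andP[e10 /andP[e11 e12]] /andP[e20 /andP[e21 e22]].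
have e3 := qdist2_qmul_le b2 b1' nb1 nb2'.
apply: He; split => // i k; rewrite /ball /= (ord1 i) !mxE.
case: (ord3P k) => -> /=.
- by apply: D0; apply: le_lt_trans (sqr_q0_sub_le _ _) _.
- by apply: D1; apply: le_lt_trans (sqr_q0_sub_le _ _) _.
- by apply: D2; have /= := sqr_q0_sub_le (qmul b1 b2) (qmul b1' b2'); lra.
Qed.

End MomentMapQuaternions.

Section Quotient.
Variable R : realType.
Local Notation C := (R[i]).

Lemma SU2_unit (k : 'M[C]_2) : SU2 k -> k \in unitmx.
Proof. by case=> _ d; rewrite unitmxE d unitr1. Qed.

Lemma fK_conj (k h : 'M[C]_2) : k \in unitmx -> fK (k *m h *m invmx k) = fK h.
Proof. by move=> u; rewrite /fK mxtrace_mulC mulmxA mulVmx // mul1mx. Qed.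

Lemma mu_rep_conjq (k : 'M[C]_2) (x : quad R) : SU2 k -> mu_rep (conjq k x) = mu_rep x.
Proof.
move=> /SU2_unit u; case: x => [[[g1 h1] g2] h2] /=.
have -> : k *m h1 *m invmx k *m (k *m h2 *m invmx k) = k *m (h1 *m h2) *m invmx k.
  by rewrite !mulmxA mulmxKV.
by rewrite !fK_conj.
Qed.

Lemma mem_orbit (x : quad R) : Defs.orbit x x.
Proof.
exists 1%:M; first by split; rewrite ?det1 // /conjT map_mx1 trmx1 mulmx1.
by case: x => [[[g1 h1] g2] h2] /=; rewrite invmx1 !mul1mx !mulmx1.
Qed.

Lemma mu_qmap (x : Xtype R) : mu (qmap x) = mu_rep (proj1_sig x).
Proof.
rewrite /mu /rep; case: (cid _) => r /= E.
by have := mem_orbit (proj1_sig x); rewrite E => -[k sk ->]; rewrite mu_rep_conjq.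
Qed.

Lemma qmap_surj (m : Mspace R) : exists x, m = qmap x.
Proof.
case: m => S pf; have [x ex] := pf; exists x; rewrite /qmap.
by move: pf; rewrite ex => pf; congr exist; exact: Prop_irrelevance.
Qed.

End Quotient.

Section OpenDense.
Variable R : realType.
Local Notation quat := (quat R).
Local Notation qm := (@quat_mx R).

Lemma normc_lt_sqr (a b e : R) : 0 < e ->
  (`|(a +i* b)%C| < e%:C%C) = (a ^+ 2 + b ^+ 2 < e ^+ 2).
Proof.
move=> e0; rewrite normc_def ltcR /=.
by rewrite -[X in _ = X]ltr_sqrt ?exprn_gt0 // sqrtr_sqr gtr0_norm.
Qed.

Lemma qdist2_lt_entries (p p' : quat) h : 0 < h ->
  (forall i j, `|qm p i j - qm p' i j| < h%:C%C) -> qdist2 p p' < 2 * h ^+ 2.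
Proof.
move=> h0 H; move: (H ord0 ord0) (H ord0 ord_max); rewrite !mxE /= !normc_lt_sqr //.
by rewrite /qdist2; lra.
Qed.

Lemma entries_lt_qdist2 (p p' : quat) e : 0 < e -> qdist2 p p' < e ^+ 2 ->
  forall i j, `|qm p i j - qm p' i j| < e%:C%C.
Proof.
rewrite /qdist2 => e0 d i j; rewrite !mxE.
have := sqr_ge0 (q0 p - q0 p'); have := sqr_ge0 (q1 p - q1 p').
have := sqr_ge0 (q2 p - q2 p'); have := sqr_ge0 (q3 p - q3 p').
by case: (ord2P i) => ->; case: (ord2P j) => -> /=; rewrite normc_lt_sqr //; lra.
Qed.

Lemma open_Mcirc : openM (@Mcirc R).
Proof.
move=> x; rewrite /preimage /Mcirc /= mu_qmap.
have [a1 [b1 [a2 [b2 [-> [[_ nb1 _ nb2] _]]]]]] := Xrep_Xq (proj2_sig x).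
rewrite mu_rep_quat_mx => /(tetra_int_muq_near nb1 nb2) [d d0 near].
have [h h0 /ltW hd] := small_sqr_mul (ler0n R 2) d0; rewrite mulrC in hd.
exists h => // y hy; rewrite mu_qmap.
have [a1' [b1' [a2' [b2' [ey [[_ nb1' _ nb2'] _]]]]]] := Xrep_Xq (proj2_sig y).
move: hy; rewrite ey mu_rep_quat_mx => hy.
by apply: near => //; apply: lt_le_trans hd;
  apply: qdist2_lt_entries => // i j; case: (hy i j).
Qed.

Lemma dense_Mcirc : denseM (@Mcirc R).
Proof.
move=> V oV [m Vm]; have [x xm] := qmap_surj m; subst m.
have [e e0 He] := oV x Vm.
have [a1 [b1 [a2 [b2 [ex X]]]]] := Xrep_Xq (proj2_sig x).
have [b1' [a2' [b2' [X' d1 d2 d3 tr]]]] := Xq_dense_transverse X (exprn_gt0 2 e0).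
pose y : Xtype R := exist _ (qm a1, qm b1', qm a2', qm b2') (Xq_Xrep X').
have [[_ nb1 _ nb2] _] := X'.
exists (qmap y); split.
- apply: He; rewrite ex => i j.
  have close p p' : qdist2 p' p < e ^+ 2 -> `|qm p i j - qm p' i j| < e%:C%C.
    by rewrite qdist2C => d; apply: entries_lt_qdist2.
  by split; apply: close; rewrite ?qdist2xx ?exprn_gt0.
- by rewrite /Mcirc /preimage /= mu_qmap mu_rep_quat_mx; exact: tetra_int_transverse.
Qed.

End OpenDense.

Theorem mainTheorem10 (R : realType) :
  openM (@Mcirc R) /\ denseM (@Mcirc R).
Proof. split; [exact: open_Mcirc | exact: dense_Mcirc]. Qed.
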